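(* Let $R = M_2(\mathbb{F}_2)$ be the ring of $2\times 2$ matrices over the field with two elements (a non-commutative ring with unity of order $16$ having exactly $10$ zero-divisors, counting $0$). Consider the (left) projective line $P(R)$. Then: (i) $P(R)$ has exactly $35$ points; (ii) exactly $26$ of these points have a representative pair $(a,b)$ in which $a$ or $b$ is a unit of $R$; (iii) every point of $P(R)$ has exactly $18$ neighbours other than itself; (iv) any two distant points of $P(R)$ have exactly $9$ common neighbours; (v) any three pairwise distant points of $P(R)$ have exactly $3$ common neighbours; (vi) the maximum cardinality of a set of pairwise distant points of $P(R)$ is $5$. *)

From mathcomp Require Import all_boot all_order all_algebra.
Set Implicit Arguments. Unset Strict Implicit. Unset Printing Implicit Defensive.
Import GRing.Theory.
Local Open Scope ring_scope.

Section ProjLine.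
Variable R : finNzRingType.

Definition mx2 (a b c d : R) : 'M[R]_2 :=
  \matrix_(i < 2, j < 2)
    if i == 0 :> nat then (if j == 0 :> nat then a else b)
    else (if j == 0 :> nat then c else d).

Definition invertible2 (a b c d : R) : bool :=
  [exists B : 'M[R]_2, (mx2 a b c d *m B == 1%:M) && (B *m mx2 a b c d == 1%:M)].

Definition admissible (p : R * R) : bool :=
  [exists c : R, [exists d : R, invertible2 p.1 p.2 c d]].

Definition gen (p : R * R) : {set R * R} :=
  [set (r * p.1, r * p.2) | r : R].

Definition projLine : {set {set R * R}} :=
  [set gen p | p in [set p : R * R | admissible p]].

Definition represents (p : R * R) (X : {set R * R}) : bool :=
  (X == gen p).

Definition distant (X Y : {set R * R}) : bool :=
  [exists p : R * R, [exists q : R * R,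
     [&& represents p X, represents q Y & invertible2 p.1 p.2 q.1 q.2]]].

Definition neighbour (X Y : {set R * R}) : bool := ~~ distant X Y.

Definition pairwise_distant (S : {set {set R * R}}) : bool :=
  [forall X in S, forall Y in S, (X != Y) ==> distant X Y].

End ProjLine.

Definition M2F2 : finNzRingType := 'M['F_2]_2.

From mathcomp Require Import all_boot all_order all_algebra.
Set Implicit Arguments. Unset Strict Implicit. Unset Printing Implicit Defensive.
Import GRing.Theory.
Local Open Scope ring_scope.

(* Everything except the upper bound in (vi) is a finite computation. Matrices
   over F_2 are encoded by quadruples of bits, each of the 35 points by one
   admissible pair, and two points are decided distant when their cyclic
   submodules meet only in 0: over any ring distant points meet only in 0, and
   conversely an inverse of the matrix formed by the two representatives is
   found by search.

   For the bound, let e = E_11. A point R(a,b) is a free left module, so the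
   vectors of R(a,b) fixed by left multiplication by e correspond to eR and
   there are |eR| - 1 = 3 nonzero ones; distant points share only 0, and R^2
   contains only |eR|^2 - 1 = 15 nonzero e-fixed vectors. Hence at most
   15 / 3 = 5 points are pairwise distant. *)

Section Mx2.
Variable R : finNzRingType.

Lemma mx2_mul (a b c d e f g h : R) :
  mx2 a b c d *m mx2 e f g h = mx2 (a * e + b * g) (a * f + b * h) (c * e + d * g) (c * f + d * h).
Proof.
apply/matrixP => i j; rewrite !mxE big_ord_recr big_ord1 !mxE /=.
by case: i => [[|[|]] ?] //; case: j => [[|[|]] ?].
Qed.

Lemma mx2_1 : mx2 1 0 0 1 = 1%:M :> 'M[R]_2.
Proof.
by apply/matrixP => i j; rewrite !mxE; case: i => [[|[|]] ?] //; case: j => [[|[|]] ?].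
Qed.

Lemma mx2_eta (M : 'M[R]_2) : M = mx2 (M 0 0) (M 0 1) (M 1 0) (M 1 1).
Proof.
apply/matrixP => i j; rewrite !mxE.
by case: i => [[|[|]] ?] //; case: j => [[|[|]] ?] //=; congr (M _ _); apply: val_inj.
Qed.

Lemma mx2_inj (a b c d a' b' c' d' : R) :
  mx2 a b c d = mx2 a' b' c' d' -> [/\ a = a', b = b', c = c' & d = d'].
Proof.
move=> E; have Eij i j := congr1 (fun M : 'M[R]_2 => M i j) E.
by move: (Eij 0 0) (Eij 0 1) (Eij 1 0) (Eij 1 1); rewrite !mxE.
Qed.

End Mx2.

Lemma leq_sum_card_disjoint (I U : finType) (S : {set I}) (F : I -> {set U}) (B : {set U}) :
  {in S &, forall X Y z, z \in F X -> z \in F Y -> X = Y} ->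
  {in S, forall X, F X \subset B} ->
  (\sum_(X in S) #|F X| <= #|B|)%N.
Proof.
move=> disj sub.
have cardF X : X \in S -> #|F X| = (\sum_(z in B) (z \in F X))%N.
  move=> XS; rewrite -sum1_card (eq_bigl (fun z => (z \in B) && (z \in F X))).
    by rewrite big_mkcondr; apply: eq_bigr => z _; case: (z \in F X).
  by move=> z; rewrite andb_idl // => /(subsetP (sub X XS)).
rewrite (eq_bigr _ cardF) exchange_big -[#|B|]sum1_card leq_sum // => z _.
rewrite (eq_bigr (fun X => if z \in F X then 1 else 0))%N; last by move=> X _; case: (z \in F X).
rewrite -big_mkcondr sum1dep_card; apply/card_le1_eqP => X Y.
by rewrite !inE => /andP [XS zX] /andP [YS zY]; apply: (disj _ _ YS XS _ zY zX).
Qed.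

Lemma card_ord_count n (P : pred nat) : (#|[set i : 'I_n | P i]| = count P (iota 0 n))%N.
Proof. by rewrite -val_enum_ord count_map cardsE cardE /enum_mem size_filter filter_predT. Qed.

Lemma all_iota n (P : pred nat) : all P (iota 0 n) -> forall i, (i < n)%N -> P i.
Proof. by move=> /allP P_all i lt_in; apply: P_all; rewrite mem_iota. Qed.

Section ProjectiveLine.
Variable T : finNzRingType.

Lemma genP (p z : T * T) : reflect (exists r, z = (r * p.1, r * p.2)) (z \in gen p).
Proof. by apply: (iffP imsetP) => [[r _ ->]|[r ->]]; exists r. Qed.

Lemma gen_id (p : T * T) : p \in gen p.
Proof. by apply/genP; exists 1; rewrite !mul1r; case: p. Qed.

Lemma gen_subset (p q : T * T) : p \in gen q -> gen p \subset gen q.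
Proof.
move=> /genP [r ->]; apply/subsetP => z /genP [s ->].
by apply/genP; exists (s * r); rewrite !mulrA.
Qed.

Lemma eq_gen (p q : T * T) : (gen p == gen q) = (p \in gen q) && (q \in gen p).
Proof.
apply/eqP/andP => [E|[pq qp]]; first by rewrite -E {2}E !gen_id.
by apply/eqP; rewrite eqEsubset !gen_subset.
Qed.

Lemma invertible2_rinv (a b c d : T) : invertible2 a b c d ->
  exists e f g h : T, [/\ a * e + b * g = 1, a * f + b * h = 0,
                          c * e + d * g = 0 & c * f + d * h = 1].
Proof.
case/existsP => B /andP [/eqP + _]; rewrite [B]mx2_eta mx2_mul -mx2_1.
by case/mx2_inj; exists (B 0 0), (B 0 1), (B 1 0), (B 1 1).
Qed.

Lemma admissible_annihilator (p : T * T) (r : T) :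
  admissible p -> r * p.1 = 0 -> r * p.2 = 0 -> r = 0.
Proof.
case/existsP => c /existsP [d /invertible2_rinv [e [f [g [h [E1 _ _ _]]]]]] r1 r2.
by rewrite -[r]mulr1 -E1 mulrDr !mulrA r1 r2 !mul0r addr0.
Qed.

Lemma distant_meet (X Y : {set T * T}) z :
  distant X Y -> z \in X -> z \in Y -> z = (0, 0).
Proof.
case/existsP => p /existsP [q /and3P [/eqP -> /eqP ->]].
case/invertible2_rinv => e [f [g [h [E1 _ E3 _]]]] /genP [u ->] /genP [v [u1 u2]].
suff -> : u = 0 by rewrite !mul0r.
by rewrite -[u]mulr1 -E1 mulrDr !mulrA u1 u2 -!mulrA -mulrDr E3 mulr0.
Qed.

Section Packing.
Variable e : T.
Hypothesis e_idem : e * e = e.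

Definition efixed (A : {set T * T}) : {set T * T} :=
  [set z in A | (e * z.1, e * z.2) == z] :\ (0, 0).

Local Notation eT := [set e * r | r : T].

Lemma card_efixed_gen p : admissible p -> #|efixed (gen p)| = #|eT|.-1.
Proof.
move=> adm_p; pose f r := (r * p.1, r * p.2).
have f_inj : injective f.
  move=> r s [E1 E2]; apply/eqP; rewrite -subr_eq0; apply/eqP.
  by apply: (admissible_annihilator adm_p); rewrite mulrBl ?E1 ?E2 subrr.
have fixed_gen : [set z in gen p | (e * z.1, e * z.2) == z] = f @: eT.
  apply/setP => z; rewrite inE; apply/andP/imsetP => [[/genP [r ->] /eqP E]|].
    by exists (e * r); [apply: imset_f | rewrite -E /f /= !mulrA].
  case=> _ /imsetP [r _ ->] ->; split; first by apply/genP; exists (e * r).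
  by rewrite /f /= !mulrA e_idem.
have fixed0 : (0, 0) \in [set z in gen p | (e * z.1, e * z.2) == z].
  by rewrite inE !mulr0 eqxx andbT; apply/genP; exists 0; rewrite !mul0r.
have := cardsD1 (0, 0) [set z in gen p | (e * z.1, e * z.2) == z].
by rewrite fixed0 {1}fixed_gen card_imset // => ->.
Qed.

Lemma card_efixed_setT : (#|efixed setT| <= (#|eT| ^ 2).-1)%N.
Proof.
have sub : [set z in setT | (e * z.1, e * z.2) == z] \subset setX eT eT.
  apply/subsetP => -[x y]; rewrite !inE => /eqP [<- <-]; by rewrite /= !imset_f.
have fixed0 : (0, 0) \in [set z in setT | (e * z.1, e * z.2) == z].
  by rewrite !inE !mulr0 eqxx.
move: (subset_leq_card sub); rewrite cardsX mulnn (cardsD1 (0, 0)) fixed0 add1n.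
by case: (#|eT| ^ 2)%N.
Qed.

Lemma pairwise_distant_card_efixed (S : {set {set T * T}}) :
  S \subset projLine T -> pairwise_distant S -> (#|S| * #|eT|.-1 <= (#|eT| ^ 2).-1)%N.
Proof.
move=> /subsetP SP /forall_inP pd; apply: leq_trans card_efixed_setT.
have card_S X : X \in S -> #|efixed X| = #|eT|.-1.
  by case/SP/imsetP => p; rewrite inE => adm_p ->; apply: card_efixed_gen.
rewrite -sum_nat_const -(eq_bigr _ card_S).
apply: leq_sum_card_disjoint => [X Y XS YS z|X _]; last first.
  by apply/subsetP => z; rewrite !inE => /and3P [-> _ ->].
rewrite !inE => /and3P [z0 zX _] /and3P [_ zY _].
apply: contraNeq z0 => XY; apply/eqP.
exact: distant_meet (implyP (forall_inP (pd X XS) Y YS) XY) zX zY.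
Qed.

Lemma pairwise_distant_card_le (S : {set {set T * T}}) :
  (1 < #|eT|)%N -> S \subset projLine T -> pairwise_distant S -> (#|S| <= #|eT|.+1)%N.
Proof.
move=> k_gt1 SP pd; have := pairwise_distant_card_efixed SP pd.
case: #|eT| k_gt1 => [|[|k]] // _.
have -> : (k.+2 ^ 2).-1 = k.+3 * k.+1.
  by rewrite -subn1 -{2}(exp1n 2) subn_sqr subn1 addn1 mulnC.
by rewrite leq_pmul2r.
Qed.

End Packing.
End ProjectiveLine.

Section M2F2.

Local Notation bit b := (b%:R : 'F_2).

Lemma bitM (a b : bool) : bit (a && b) = bit a * bit b.
Proof. by case: a; case: b; rewrite ?mulr0 ?mulr1. Qed.

Lemma bitD (a b : bool) : bit (a (+) b) = bit a + bit b.
Proof. by case: a; case: b; rewrite ?addr0 ?add0r //; apply: val_inj. Qed.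

Lemma bit_inj : injective (fun b : bool => bit b).
Proof. by case; case. Qed.

Lemma bitK (x : 'F_2) : bit (x != 0) = x.
Proof. by case: x => [[|[|n]] lt_n2]; apply: val_inj. Qed.

Local Notation R := 'M['F_2]_2.

Definition bmx := ((bool * bool) * (bool * bool))%type.

Definition mx_of_bmx (x : bmx) : R :=
  let: ((a, b), (c, d)) := x in mx2 (bit a) (bit b) (bit c) (bit d).

Arguments mx_of_bmx : simpl never.

Definition bmx_of_mx (M : R) : bmx :=
  ((M 0 0 != 0, M 0 1 != 0), (M 1 0 != 0, M 1 1 != 0)).

Definition bmx0 : bmx := ((false, false), (false, false)).
Definition bmx1 : bmx := ((true, false), (false, true)).

Definition bmx_add (x y : bmx) : bmx :=
  let: ((a, b), (c, d)) := x in let: ((e, f), (g, h)) := y in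
  ((a (+) e, b (+) f), (c (+) g, d (+) h)).

Definition bmx_mul (x y : bmx) : bmx :=
  let: ((a, b), (c, d)) := x in let: ((e, f), (g, h)) := y in
  (((a && e) (+) (b && g), (a && f) (+) (b && h)),
   ((c && e) (+) (d && g), (c && f) (+) (d && h))).

Arguments bmx_add : simpl never.
Arguments bmx_mul : simpl never.

Lemma bmx_of_mxK : cancel bmx_of_mx mx_of_bmx.
Proof. by move=> M; rewrite /mx_of_bmx /= !bitK -mx2_eta. Qed.

Lemma mx_of_bmx_inj : injective mx_of_bmx.
Proof.
move=> [[a b] [c d]] [[a' b'] [c' d']] /mx2_inj [].
by move=> /bit_inj-> /bit_inj-> /bit_inj-> /bit_inj->.
Qed.

Lemma mx_of_bmx0 : mx_of_bmx bmx0 = 0.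
Proof.
apply/matrixP => i j; rewrite /mx_of_bmx !mxE.
by case: i => [[|[|]] ?] //; case: j => [[|[|]] ?].
Qed.

Lemma mx_of_bmx1 : mx_of_bmx bmx1 = 1.
Proof. exact: mx2_1. Qed.

Lemma mx_of_bmxD x y : mx_of_bmx (bmx_add x y) = mx_of_bmx x + mx_of_bmx y.
Proof.
case: x y => [[a b] [c d]] [[e f] [g h]]; apply/matrixP => i j.
rewrite /mx_of_bmx !mxE !bitD.
by case: i => [[|[|]] ?] //; case: j => [[|[|]] ?].
Qed.

Lemma mx_of_bmxM x y : mx_of_bmx (bmx_mul x y) = mx_of_bmx x * mx_of_bmx y.
Proof.
case: x y => [[a b] [c d]] [[e f] [g h]].
by rewrite /mx_of_bmx /= -mulmxE mx2_mul !bitD !bitM.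
Qed.

Definition bmx_enum : seq bmx :=
  let bits2 := [seq (a, b) | a <- [:: false; true], b <- [:: false; true]] in
  [seq (x, y) | x <- bits2, y <- bits2].

Lemma mem_bmx_enum x : x \in bmx_enum.
Proof. by case: x => [[[] []] [[] []]]. Qed.

Definition bvec := (bmx * bmx)%type.

Definition bvec_enum : seq bvec := [seq (x, y) | x <- bmx_enum, y <- bmx_enum].

Lemma mem_bvec_enum p : p \in bvec_enum.
Proof. by case: p => x y; apply/allpairsP; exists (x, y); rewrite !mem_bmx_enum. Qed.

Definition vec_of_bvec (p : bvec) : R * R := (mx_of_bmx p.1, mx_of_bmx p.2).
Definition bvec_of_vec (v : R * R) : bvec := (bmx_of_mx v.1, bmx_of_mx v.2).

Lemma bvec_of_vecK : cancel bvec_of_vec vec_of_bvec.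
Proof. by case=> x y; rewrite /vec_of_bvec /= !bmx_of_mxK. Qed.

Lemma vec_of_bvec_inj : injective vec_of_bvec.
Proof. by case=> x y [x' y'] [/mx_of_bmx_inj-> /mx_of_bmx_inj->]. Qed.

Definition bgen (p : bvec) : seq bvec := [seq (bmx_mul r p.1, bmx_mul r p.2) | r <- bmx_enum].

Lemma mem_bgen p q : (vec_of_bvec q \in gen (vec_of_bvec p)) = (q \in bgen p).
Proof.
apply/genP/mapP => [[r [E1 E2]]|[r _ ->]]; last first.
  by exists (mx_of_bmx r); congr pair; apply: mx_of_bmxM.
exists (bmx_of_mx r); first exact: mem_bmx_enum.
by apply: vec_of_bvec_inj; rewrite /vec_of_bvec /= !mx_of_bmxM bmx_of_mxK -E1 -E2.
Qed.

Definition bsame (p q : bvec) : bool := (p \in bgen q) && (q \in bgen p).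

Lemma eq_gen_bvec p q : (gen (vec_of_bvec p) == gen (vec_of_bvec q)) = bsame p q.
Proof. by rewrite eq_gen !mem_bgen. Qed.

Definition bunit (x : bmx) : bool :=
  has (fun y => (bmx_mul y x == bmx1) && (bmx_mul x y == bmx1)) bmx_enum.

Lemma unit_bmx x : (mx_of_bmx x \is a GRing.unit) = bunit x.
Proof.
apply/unitrP/hasP => [[y [yx xy]]|[y _ /andP [/eqP yx /eqP xy]]].
  exists (bmx_of_mx y); first exact: mem_bmx_enum.
  by rewrite -!(inj_eq mx_of_bmx_inj) !mx_of_bmxM bmx_of_mxK mx_of_bmx1 yx xy eqxx.
by exists (mx_of_bmx y); rewrite -!mx_of_bmxM yx xy mx_of_bmx1.
Qed.

Definition badmissible (p : bvec) : bool :=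
  all (fun r => [|| r == bmx0, bmx_mul r p.1 != bmx0 | bmx_mul r p.2 != bmx0]) bmx_enum.

Lemma admissible_bvec p : admissible (vec_of_bvec p) -> badmissible p.
Proof.
move=> adm_p; apply/allP => r _; rewrite -!(inj_eq mx_of_bmx_inj) !mx_of_bmxM mx_of_bmx0.
apply/norP => -[/negP r0 /norP [/negbNE/eqP r1 /negbNE/eqP r2]].
exact/r0/eqP/(admissible_annihilator adm_p).
Qed.

Definition bdistant (p q : bvec) : bool :=
  all (fun z => (z == (bmx0, bmx0)) || (z \notin bgen q)) (bgen p).

Lemma distant_bvec p q :
  distant (gen (vec_of_bvec p)) (gen (vec_of_bvec q)) -> bdistant p q.
Proof.
move=> dpq; apply/allP => z; rewrite orbC -implybE -!mem_bgen => zp; apply/implyP => zq.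
have := distant_meet dpq zp zq.
by rewrite -mx_of_bmx0 -[(_, _)]/(vec_of_bvec (bmx0, bmx0)) => /vec_of_bvec_inj ->.
Qed.

Definition bmx2 := (bmx * bmx * bmx * bmx)%type.

Definition mx2_of_bmx2 (M : bmx2) : 'M[R]_2 :=
  let: (a, b, c, d) := M in mx2 (mx_of_bmx a) (mx_of_bmx b) (mx_of_bmx c) (mx_of_bmx d).

Definition bmx2_1 : bmx2 := (bmx1, bmx0, bmx0, bmx1).

Definition bmx2_mul (M N : bmx2) : bmx2 :=
  let: (a, b, c, d) := M in let: (e, f, g, h) := N in
  (bmx_add (bmx_mul a e) (bmx_mul b g), bmx_add (bmx_mul a f) (bmx_mul b h),
   bmx_add (bmx_mul c e) (bmx_mul d g), bmx_add (bmx_mul c f) (bmx_mul d h)).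

Lemma mx2_of_bmx2M M N : mx2_of_bmx2 (bmx2_mul M N) = mx2_of_bmx2 M *m mx2_of_bmx2 N.
Proof.
by case: M N => [[[a b] c] d] [[[e f] g] h]; rewrite /= mx2_mul !mx_of_bmxD !mx_of_bmxM.
Qed.

(* Right inverses are two-sided in the finite ring M_2(M_2(F_2)), so solving
   for the two columns separately finds the inverse whenever there is one. *)
Definition bsolve (M : bmx2) (u v : bmx) : bvec :=
  let: (a, b, c, d) := M in
  let sol x := (bmx_add (bmx_mul a x.1) (bmx_mul b x.2) == u) &&
               (bmx_add (bmx_mul c x.1) (bmx_mul d x.2) == v) in
  nth (bmx0, bmx0) bvec_enum (find sol bvec_enum).

Definition binv2 (M : bmx2) : bmx2 :=
  let: (e, g) := bsolve M bmx1 bmx0 in let: (f, h) := bsolve M bmx0 bmx1 in (e, f, g, h).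

Definition binvertible2 (M : bmx2) : bool :=
  (bmx2_mul M (binv2 M) == bmx2_1) && (bmx2_mul (binv2 M) M == bmx2_1).

Lemma binvertible2P a b c d : binvertible2 (a, b, c, d) ->
  invertible2 (mx_of_bmx a) (mx_of_bmx b) (mx_of_bmx c) (mx_of_bmx d).
Proof.
case/andP => /eqP r_inv /eqP l_inv; apply/existsP.
exists (mx2_of_bmx2 (binv2 (a, b, c, d))).
change (mx2 _ _ _ _) with (mx2_of_bmx2 (a, b, c, d)).
by rewrite -!mx2_of_bmx2M r_inv l_inv /= mx_of_bmx0 mx_of_bmx1 mx2_1 eqxx.
Qed.

Local Open Scope nat_scope.

(* The pairs generating the same submodule as c all lie in [bgen c]. *)
Definition bcanon (c : bvec) : bvec :=
  let class := [seq x <- bgen c | c \in bgen x] in head c [seq x <- bvec_enum | x \in class].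

Definition reps : seq bvec := [seq c <- bvec_enum | badmissible c && (bcanon c == c)].

Definition rep (i : nat) : bvec := nth (bmx0, bmx0) reps i.

Definition point (i : nat) : {set R * R} := gen (vec_of_bvec (rep i)).

Definition points : {set {set R * R}} := [set point i | i : 'I_35].

(* Tabulated, so that the counts below evaluate [bdistant] only 35^2 times. *)
Definition dist_table : seq (seq bool) := [seq [seq bdistant p q | q <- reps] | p <- reps].

Definition bdist (i j : nat) : bool := nth false (nth [::] dist_table i) j.

Lemma size_reps : size reps = 35.
Proof. by vm_compute. Qed.

Lemma reps_cover : all (fun c => badmissible c ==> has (bsame c) reps) bvec_enum.
Proof. by vm_compute. Qed.

Lemma reps_inequivalent :
  all (fun i => all (fun j => bsame (rep i) (rep j) ==> (i == j)) (iota 0 35)) (iota 0 35).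
Proof. by vm_compute. Qed.

Lemma bdist_binvertible2 : all (fun i => all (fun j => bdist i j ==>
  binvertible2 ((rep i).1, (rep i).2, (rep j).1, (rep j).2)) (iota 0 35)) (iota 0 35).
Proof. by vm_compute. Qed.

Lemma has_bdist : all (fun i => has (bdist i) (iota 0 35)) (iota 0 35).
Proof. by vm_compute. Qed.

Lemma bdistE i j : i < 35 -> j < 35 -> bdist i j = bdistant (rep i) (rep j).
Proof.
move=> lt_i lt_j; rewrite /bdist (nth_map (bmx0, bmx0)) ?size_reps //.
by rewrite (nth_map (bmx0, bmx0)) ?size_reps.
Qed.

Lemma bdist_invertible2 i j : i < 35 -> j < 35 -> bdist i j ->
  invertible2 (vec_of_bvec (rep i)).1 (vec_of_bvec (rep i)).2
              (vec_of_bvec (rep j)).1 (vec_of_bvec (rep j)).2.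
Proof.
move=> lt_i lt_j dij; apply: binvertible2P.
exact: implyP (all_iota (all_iota bdist_binvertible2 lt_i) lt_j) dij.
Qed.

Lemma point_distant i j : i < 35 -> j < 35 -> distant (point i) (point j) = bdist i j.
Proof.
move=> lt_i lt_j; apply/idP/idP => [/distant_bvec|dij]; first by rewrite bdistE.
apply/existsP; exists (vec_of_bvec (rep i)); apply/existsP; exists (vec_of_bvec (rep j)).
by rewrite /represents !eqxx bdist_invertible2.
Qed.

Lemma admissible_rep i : i < 35 -> admissible (vec_of_bvec (rep i)).
Proof.
move=> lt_i; have /hasP [j] := all_iota has_bdist lt_i.
rewrite mem_iota => lt_j /(bdist_invertible2 lt_i lt_j) inv.
by apply/existsP; exists (mx_of_bmx (rep j).1); apply/existsP; exists (mx_of_bmx (rep j).2).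
Qed.

Lemma point_eq i j : i < 35 -> j < 35 -> (point i == point j) = (i == j).
Proof.
move=> lt_i lt_j; apply/idP/idP => [|/eqP -> //]; rewrite eq_gen_bvec.
exact/implyP/(all_iota (all_iota reps_inequivalent lt_i) lt_j).
Qed.

Lemma point_inj : injective (fun i : 'I_35 => point i).
Proof. by move=> i j /eqP; rewrite point_eq // => /eqP /val_inj. Qed.

Lemma projLine_M2F2 : projLine R = points.
Proof.
apply/setP => X; apply/imsetP/imsetP => [[v]|[i _ ->]]; last first.
  by exists (vec_of_bvec (rep i)); rewrite ?inE ?admissible_rep.
rewrite inE -[v]bvec_of_vecK => /admissible_bvec adm ->.
have /hasP [c c_rep same] := implyP (allP reps_cover _ (mem_bvec_enum _)) adm.
have lt_i : index c reps < 35 by rewrite -size_reps index_mem.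
exists (Ordinal lt_i) => //; apply/eqP.
by rewrite /point /rep nth_index // eq_gen_bvec.
Qed.

Lemma card_points (Q : pred {set R * R}) :
  #|[set X in points | Q X]| = count (fun i => Q (point i)) (iota 0 35).
Proof.
rewrite -card_ord_count -(card_imset _ point_inj); apply: eq_card => X; rewrite inE.
apply/andP/imsetP => [[/imsetP [i _ ->] QX]|[i]]; first by exists i; rewrite ?inE.
by rewrite inE => Qi ->; split; first exact: imset_f.
Qed.

Lemma pointsP X : X \in points -> exists2 i, i < 35 & X = point i.
Proof. by case/imsetP => i _ ->; exists i. Qed.

Lemma unit_point i : i < 35 ->
  [exists p : R * R, represents p (point i) && ((p.1 \is a GRing.unit) || (p.2 \is a GRing.unit))]
  = has (fun c => bsame (rep i) c && (bunit c.1 || bunit c.2)) bvec_enum.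
Proof.
move=> lt_i; apply/existsP/hasP => [[p /andP [rep_p unit_p]]|[c _ /andP [same unit_c]]].
  exists (bvec_of_vec p); first exact: mem_bvec_enum.
  by rewrite -eq_gen_bvec -!unit_bmx bvec_of_vecK !bmx_of_mxK unit_p andbT.
by exists (vec_of_bvec c); rewrite /represents /point eq_gen_bvec same !unit_bmx.
Qed.

Lemma count_unit_points : count (fun i =>
  has (fun c => bsame (rep i) c && (bunit c.1 || bunit c.2)) bvec_enum) (iota 0 35) = 26.
Proof. by vm_compute. Qed.

Lemma card_unit_points :
  #|[set X in points | [exists p : R * R, represents p X &&
      ((p.1 \is a GRing.unit) || (p.2 \is a GRing.unit))]]| = 26.
Proof.
rewrite card_points -[RHS]count_unit_points; apply: eq_in_count => i.
by rewrite mem_iota => /andP [_ /unit_point].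
Qed.

Lemma count_neighbours :
  all (fun i => count (fun j => (j != i) && ~~ bdist i j) (iota 0 35) == 18) (iota 0 35).
Proof. by vm_compute. Qed.

Lemma card_neighbours X :
  X \in points -> #|[set Y in points | (Y != X) && neighbour X Y]| = 18.
Proof.
case/pointsP => i lt_i ->; rewrite card_points -[RHS](eqP (all_iota count_neighbours lt_i)).
apply: eq_in_count => j; rewrite mem_iota => /andP [_ lt_j].
by rewrite /neighbour point_eq // point_distant.
Qed.

Lemma count_common_neighbours2 : all (fun i => all (fun j => bdist i j ==>
  (count (fun k => ~~ bdist k i && ~~ bdist k j) (iota 0 35) == 9)) (iota 0 35)) (iota 0 35).
Proof. by vm_compute. Qed.

Lemma card_common_neighbours2 X Y : X \in points -> Y \in points -> distant X Y ->
  #|[set Z in points | neighbour Z X && neighbour Z Y]| = 9.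
Proof.
case/pointsP => i lt_i ->; case/pointsP => j lt_j ->; rewrite point_distant // => dij.
have := implyP (all_iota (all_iota count_common_neighbours2 lt_i) lt_j) dij.
rewrite card_points => /eqP count2; rewrite -[RHS]count2.
apply: eq_in_count => k; rewrite mem_iota => /andP [_ lt_k].
by rewrite /neighbour !point_distant.
Qed.

Lemma count_common_neighbours3 : all (fun i => all (fun j => all (fun k =>
  [&& bdist i j, bdist i k & bdist j k] ==>
  (count (fun l => [&& ~~ bdist l i, ~~ bdist l j & ~~ bdist l k]) (iota 0 35) == 3))
  (iota 0 35)) (iota 0 35)) (iota 0 35).
Proof. by vm_compute. Qed.

Lemma card_common_neighbours3 X Y Z : X \in points -> Y \in points -> Z \in points ->
  distant X Y -> distant X Z -> distant Y Z ->
  #|[set W in points | [&& neighbour W X, neighbour W Y & neighbour W Z]]| = 3.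
Proof.
case/pointsP => i lt_i ->; case/pointsP => j lt_j ->; case/pointsP => k lt_k ->.
rewrite !point_distant // => dij dik djk.
have := all_iota (all_iota (all_iota count_common_neighbours3 lt_i) lt_j) lt_k.
rewrite dij dik djk card_points => /eqP count3; rewrite -[RHS]count3.
apply: eq_in_count => l; rewrite mem_iota => /andP [_ lt_l].
by rewrite /neighbour !point_distant.
Qed.

Definition greedy_clique : seq nat :=
  foldl (fun S i => if all (bdist i) S then rcons S i else S) [::] (iota 0 35).

Lemma greedy_clique_distant :
  all (fun i => all (fun j => (i != j) ==> bdist i j) greedy_clique) greedy_clique.
Proof. by vm_compute. Qed.

Lemma exists_pairwise_distant5 :
  exists S : {set {set R * R}}, S \subset points /\ pairwise_distant S /\ #|S| = 5.
Proof.
exists ((fun i : 'I_35 => point i) @: [set i : 'I_35 | nat_of_ord i \in greedy_clique]); split.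
  by apply/subsetP => X /imsetP [i _ ->]; apply: imset_f.
split; last by rewrite (card_imset _ point_inj) card_ord_count; vm_compute.
apply/forall_inP => X /imsetP [i]; rewrite inE => ci ->.
apply/forall_inP => Y /imsetP [j]; rewrite inE => cj ->.
apply/implyP => pij; rewrite (point_distant (ltn_ord i) (ltn_ord j)).
apply: (implyP (allP (allP greedy_clique_distant i ci) j cj)).
by rewrite -(point_eq (ltn_ord i) (ltn_ord j)).
Qed.

Definition be11 : bmx := ((true, false), (false, false)).
Local Notation e11 := (mx_of_bmx be11).

Definition be11R : seq bmx :=
  [seq ((a, b), (false, false)) | a <- [:: false; true], b <- [:: false; true]].

Lemma e11_idem : (e11 * e11 = e11)%R.
Proof. by rewrite -mx_of_bmxM. Qed.

Lemma card_e11R : #|[set (e11 * r)%R | r : R]| = 4.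
Proof.
have -> : [set (e11 * r)%R | r : R] = [set mx_of_bmx x | x in be11R].
  apply/setP => M; apply/imsetP/imsetP => [[r _ ->]|[x x_e11R ->]].
    exists (bmx_mul be11 (bmx_of_mx r)); last by rewrite mx_of_bmxM bmx_of_mxK.
    by case: (bmx_of_mx r) => [[[] []] [[] []]].
  exists (mx_of_bmx x) => //; rewrite -mx_of_bmxM; congr mx_of_bmx.
  by case: x x_e11R => [[[] []] [[] []]].
rewrite (card_imset _ mx_of_bmx_inj).
by have /card_uniqP -> : uniq be11R.
Qed.

Lemma pairwise_distant_card_le5 (S : {set {set R * R}}) :
  S \subset projLine R -> pairwise_distant S -> #|S| <= 5.
Proof.
move=> SP pd; rewrite -[5]/(4.+1) -card_e11R.
by apply: (@pairwise_distant_card_le R e11 e11_idem); rewrite ?card_e11R.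
Qed.

End M2F2.

Theorem mainTheorem1 :
  let R := 'M['F_2]_2 in
  let P := projLine R in
  (* (i) *)
  #|P| = 35%N /\
  (* (ii) *)
  #|[set X in P | [exists p : R * R,
        represents p X && ((p.1 \is a GRing.unit) || (p.2 \is a GRing.unit))]]| = 26%N /\
  (* (iii) *)
  (forall X, X \in P -> #|[set Y in P | (Y != X) && neighbour X Y]| = 18%N) /\
  (* (iv) *)
  (forall X Y, X \in P -> Y \in P -> distant X Y ->
     #|[set Z in P | neighbour Z X && neighbour Z Y]| = 9%N) /\
  (* (v) *)
  (forall X Y Z, X \in P -> Y \in P -> Z \in P ->
     distant X Y -> distant X Z -> distant Y Z ->
     #|[set W in P | [&& neighbour W X, neighbour W Y & neighbour W Z]]| = 3%N) /\
  (* (vi) *)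
  (exists S : {set {set R * R}}, S \subset P /\ pairwise_distant S /\ #|S| = 5%N) /\
  (forall S : {set {set R * R}}, S \subset P -> pairwise_distant S -> (#|S| <= 5)%N).
Proof.
cbv zeta; rewrite projLine_M2F2.
split; first by rewrite (card_imset _ point_inj) card_ord.
split; first exact: card_unit_points.
split; first exact: card_neighbours.
split; first exact: card_common_neighbours2.
split; first exact: card_common_neighbours3.
split; first exact: exists_pairwise_distant5.
by move=> S; rewrite -projLine_M2F2; apply: pairwise_distant_card_le5.
Qed.
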